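(* Let $\mathcal{M}$ be a saturated model of Presburger arithmetic, $\mathcal{M}_0\preceq\mathcal{M}$ small, $p(x)\in S_n(\mathcal{M}_0)$ a complete type of dimension $n$ with set of realizations $\mathcal{P}\subseteq\mathcal{M}^n$, and $\alpha:\mathcal{P}\to\mathcal{M}$ a relatively $\mathcal{M}_0$-definable function. Let $a\in\mathcal{P}$ and suppose $q=\mathrm{tp}(\alpha(a)/\mathcal{M}_0)$ is non-algebraic. Let $\mathcal{Q}'$ be the set of elements of $\mathcal{M}$ lying in the same $\mathcal{M}_0$-cut as $\alpha(a)$. Then there are $a^1,a^2\in\mathcal{P}$ such that $\alpha(a^1)<\mathrm{dcl}(a\mathcal{M}_0)\cap\mathcal{Q}'<\alpha(a^2)$.
   Context: Presburger arithmetic is $\mathrm{Th}(\mathbb{Z},+,-,<,0,1,\{\equiv_n\}_n)$. A type over $\mathcal{M}_0$ has dimension $n$ if its realizations $c$ have $\dim(c/\mathcal{M}_0)=n$, where the dimension of a tuple is the size of a maximal dcl-independent subset of its coordinates over $\mathcal{M}_0$. A relatively $\mathcal{M}_0$-definable function on $\mathcal{P}$ is the restriction to $\mathcal{P}$ of an $\mathcal{M}_0$-definable function. Two elements lie in the same $\mathcal{M}_0$-cut if they have the same type over $\mathcal{M}_0$ in the language $\{<\}$. For $X\subseteq\mathcal{M}$, $u<X<v$ means $u<x<v$ for all $x\in X$. *)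

From Stdlib Require List.
From mathcomp Require Import all_boot all_order all_algebra.
Set Implicit Arguments.
Unset Strict Implicit.
Unset Printing Implicit Defensive.
Import Order.TTheory GRing.Theory Num.Theory.

Record pstruct := PStruct {
  car :> Type;
  s0 : car;
  s1 : car;
  sadd : car -> car -> car;
  sopp : car -> car;
  slt : car -> car -> Prop;
  scong : nat -> car -> car -> Prop  (* scong k x y  means  x ==_{k+1} y *)
}.

(* Terms and formulas with parameters from A; variables are de Bruijn indices. *)
Inductive pterm (A : Type) :=
| TVar (i : nat)
| TPar (a : A)
| TZero
| TOne
| TAdd (t u : pterm A)
| TOpp (t : pterm A).

Inductive pform (A : Type) :=
| FEq (t u : pterm A)
| FLt (t u : pterm A)
| FCong (k : nat) (t u : pterm A)   (* t ==_{k+1} u *)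
| FNot (f : pform A)
| FAnd (f g : pform A)
| FEx (f : pform A).

Arguments TVar {A}. Arguments TZero {A}. Arguments TOne {A}.

Section Semantics.
Variables (M : pstruct) (A : Type) (e : A -> M).

Fixpoint teval (env : seq M) (t : pterm A) : M :=
  match t with
  | TVar i => nth (s0 M) env i   (* unassigned variables get the constant 0 *)
  | TPar a => e a
  | TZero => s0 M
  | TOne => s1 M
  | TAdd t u => sadd (teval env t) (teval env u)
  | TOpp t => sopp (teval env t)
  end.

Fixpoint sat (env : seq M) (f : pform A) : Prop :=
  match f with
  | FEq t u => teval env t = teval env u
  | FLt t u => slt (teval env t) (teval env u)
  | FCong k t u => scong k (teval env t) (teval env u)
  | FNot f => ~ sat env f
  | FAnd f g => sat env f /\ sat env g
  | FEx f => exists x : M, sat (x :: env) f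
  end.
End Semantics.

Definition Zstruct : pstruct :=
  @PStruct int 0%R 1%R (fun x y => (x + y)%R) (fun x => (- x)%R)
    (fun x y => (x < y)%R) (fun k x y => ((k.+1)%:Z %| (x - y)%R)%Z).

Definition presburger (M : pstruct) : Prop :=
  forall f : pform void,
    sat (@of_void Zstruct) [::] f <-> sat (@of_void M) [::] f.

(* e : M0 -> M is an elementary embedding (M0 is identified with its image). *)
Definition elem_emb (M0 M : pstruct) (e : M0 -> M) : Prop :=
  forall (f : pform void) (env : seq M0),
    sat (@of_void M0) env f <-> sat (@of_void M) (map e env) f.

Definition smaller (X Y : Type) : Prop :=
  (exists f : X -> Y, injective f) /\ ~ (exists g : Y -> X, injective g).

(* M is saturated: |M|-saturated, i.e. every 1-type over a parameter set of
   cardinality < |M| which is finitely satisfiable in M is realized in M. *)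
Definition saturated (M : pstruct) : Prop :=
  forall (B : M -> Prop), smaller {x | B x} M ->
  forall q : pform {x | B x} -> Prop,
    (forall l : list (pform {x | B x}), (forall f, List.In f l -> q f) ->
       exists c : M, forall f, List.In f l -> sat (@proj1_sig M B) [:: c] f) ->
    exists c : M, forall f, q f -> sat (@proj1_sig M B) [:: c] f.

Definition finite_set (T : Type) (X : T -> Prop) : Prop :=
  exists s : list T, forall x, X x -> List.In x s.

Section OverM0.
Variables (M0 M : pstruct) (e : M0 -> M).

Definition complete_type (n : nat) (p : pform M0 -> Prop) : Prop :=
  (forall l : list (pform M0), (forall f, List.In f l -> p f) ->
     exists c : n.-tuple M0, forall f, List.In f l -> sat (id : M0 -> M0) c f) /\
  (forall f, p f \/ p (FNot f)).

Definition realizes (n : nat) (p : pform M0 -> Prop) (c : n.-tuple M) : Prop :=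
  forall f, p f -> sat e c f.

Definition in_dcl (X : seq M) (b : M) : Prop :=
  exists f : pform M0, sat e (b :: X) f /\
                      forall y, sat e (y :: X) f -> y = b.

Definition dindep (n : nat) (c : n.-tuple M) (S : {set 'I_n}) : Prop :=
  forall i, i \in S ->
    ~ in_dcl [seq tnth c j | j <- enum (S :\ i)] (tnth c i).

Definition has_dim (n : nat) (c : n.-tuple M) (k : nat) : Prop :=
  exists S : {set 'I_n},
    [/\ dindep c S, (forall i, i \notin S -> ~ dindep c (i |: S)) & #|S| = k].

Definition definable_fun (n : nat) (f : n.-tuple M -> M) : Prop :=
  exists phi : pform M0, forall (c : n.-tuple M) (y : M),
    f c = y <-> sat e ((c : seq M) ++ [:: y]) phi.

Definition rel_definable (n : nat) (p : pform M0 -> Prop)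
    (alpha : n.-tuple M -> M) : Prop :=
  exists f : n.-tuple M -> M, definable_fun f /\
    forall c, realizes p c -> alpha c = f c.

Definition tp1 (b : M) : pform M0 -> Prop := fun f => sat e [:: b] f.

Definition nonalgebraic (q : pform M0 -> Prop) : Prop :=
  forall f, q f -> ~ finite_set (fun y => sat e [:: y] f).

Definition lt_term (t : pterm M0) : Prop :=
  match t with TVar _ | TPar _ => True | _ => False end.

Fixpoint lt_form (f : pform M0) : Prop :=
  match f with
  | FEq t u => lt_term t /\ lt_term u
  | FLt t u => lt_term t /\ lt_term u
  | FCong _ _ _ => False
  | FNot f => lt_form f
  | FAnd f g => lt_form f /\ lt_form g
  | FEx f => lt_form f
  end.

(* y and z lie in the same M0-cut: same type over M0 in the language {<}. *)
Definition same_cut (y z : M) : Prop :=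
  forall f : pform M0, lt_form f -> (sat e [:: y] f <-> sat e [:: z] f).

End OverM0.

From Stdlib Require Import Classical ClassicalEpsilon ProofIrrelevance.
From mathcomp Require Import all_boot all_order all_algebra zify.
Set Implicit Arguments.
Unset Strict Implicit.
Unset Printing Implicit Defensive.
Import Order.TTheory GRing.Theory Num.Theory.

(* Fix a direction, say from below.  Consider, over M0 and a, the formulas in
   (x, y) saying that x realizes p, that y = alpha(x), and that y < d for each
   d in dcl(a M0) lying in the M0-cut of alpha(a).  By saturation it suffices
   to satisfy a formula th of p together with y < d for the least d of finitely
   many such d.  If that failed, the M0-definable set {alpha(x) : th(x)}, which
   contains alpha(a), would be bounded below by d; Presburger arithmetic proves
   that such a set has a least element m, which is M0-definable and hence lies
   in M0.  Then d <= m <= alpha(a) with m in M0, so d and alpha(a) can share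
   their M0-cut only if both equal m, which the non-algebraicity of alpha(a)
   rules out. *)

Fixpoint tsubst {A B : Type} (s : nat -> pterm B) (tau : A -> pterm B)
    (t : pterm A) : pterm B :=
  match t with
  | TVar i => s i
  | TPar x => tau x
  | TZero => TZero
  | TOne => TOne
  | TAdd t u => TAdd (tsubst s tau t) (tsubst s tau u)
  | TOpp t => TOpp (tsubst s tau t)
  end.

Definition tshift {B : Type} (t : pterm B) : pterm B :=
  tsubst (fun i => TVar i.+1) (@TPar B) t.

Definition up_subst {B : Type} (s : nat -> pterm B) (i : nat) : pterm B :=
  if i is j.+1 then tshift (s j) else TVar 0.

Fixpoint fsubst {A B : Type} (s : nat -> pterm B) (tau : A -> pterm B)
    (f : pform A) : pform B :=
  match f with
  | FEq t u => FEq (tsubst s tau t) (tsubst s tau u)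
  | FLt t u => FLt (tsubst s tau t) (tsubst s tau u)
  | FCong k t u => FCong k (tsubst s tau t) (tsubst s tau u)
  | FNot f => FNot (fsubst s tau f)
  | FAnd f g => FAnd (fsubst s tau f) (fsubst s tau g)
  | FEx f => FEx (fsubst (up_subst s) (fun x => tshift (tau x)) f)
  end.

Fixpoint tparams {A : Type} (t : pterm A) : seq A :=
  match t with
  | TPar x => [:: x]
  | TAdd t u => tparams t ++ tparams u
  | TOpp t => tparams t
  | _ => [::]
  end.

Fixpoint fparams {A : Type} (f : pform A) : seq A :=
  match f with
  | FEq t u | FLt t u | FCong _ t u => tparams t ++ tparams u
  | FNot f | FEx f => fparams f
  | FAnd f g => fparams f ++ fparams g
  end.

Lemma In_cat_forall (A : Type) (P : A -> Prop) (l1 l2 : seq A) :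
  (forall x, List.In x (l1 ++ l2) -> P x) ->
  (forall x, List.In x l1 -> P x) /\ (forall x, List.In x l2 -> P x).
Proof. by move=> H; split=> x Hx; apply: H; apply: List.in_or_app; tauto. Qed.

Section Substitution.
Variables (M : pstruct) (A B : Type).

Lemma teval_shift (h : B -> M) env x t : teval h (x :: env) (tshift t) = teval h env t.
Proof. by elim: t => //= [t -> u ->|t ->]. Qed.

Lemma teval_subst (h : B -> M) (h' : A -> M) env env' s tau t :
  (forall x, List.In x (tparams t) -> teval h env (tau x) = h' x) ->
  (forall i, teval h env (s i) = nth (s0 M) env' i) ->
  teval h env (tsubst s tau t) = teval h' env' t.
Proof.
move=> + Hs; elim: t => [i|x| | |t IHt u IHu|t IHt] //= Htau.
- by apply: Htau; left.
- by have [H1 H2] := In_cat_forall Htau; rewrite IHt ?IHu.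
- by rewrite IHt.
Qed.

Lemma sat_subst (f : pform A) : forall (h : B -> M) (h' : A -> M) env env' s tau,
  (forall x, List.In x (fparams f) -> teval h env (tau x) = h' x) ->
  (forall i, teval h env (s i) = nth (s0 M) env' i) ->
  (sat h env (fsubst s tau f) <-> sat h' env' f).
Proof.
elim: f => [t u|t u|k t u|f IH|f IHf g IHg|f IH] h h' env env' s tau Htau Hs /=;
  try (have [H1 H2] := In_cat_forall Htau;
       rewrite (teval_subst H1 Hs) (teval_subst H2 Hs); reflexivity).
- by rewrite (IH _ h' _ env' _ _ Htau Hs).
- have [H1 H2] := In_cat_forall Htau.
  by rewrite (IHf _ h' _ env' _ _ H1 Hs) (IHg _ h' _ env' _ _ H2 Hs).
- have IHx x : sat h (x :: env) (fsubst (up_subst s) (fun y => tshift (tau y)) f)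
      <-> sat h' (x :: env') f.
    apply: IH => [y Hy|[|i] /=]; rewrite ?teval_shift //; exact: Htau.
  by split=> -[x /IHx Hx]; exists x.
Qed.
End Substitution.

Definition fimp {A : Type} (f g : pform A) : pform A := FNot (FAnd f (FNot g)).
Definition fdisj {A : Type} (f g : pform A) : pform A := FNot (FAnd (FNot f) (FNot g)).

Fixpoint fconj {A : Type} (l : seq (pform A)) : pform A :=
  if l is f :: l then FAnd f (fconj l) else FEq TZero TZero.

Fixpoint fexists {A : Type} (k : nat) (f : pform A) : pform A :=
  if k is k.+1 then FEx (fexists k f) else f.

Definition fforall {A : Type} (k : nat) (f : pform A) : pform A :=
  FNot (fexists k (FNot f)).

Section Connectives.
Variables (M : pstruct) (A : Type) (h : A -> M).

Lemma sat_fimp env f g : sat h env (fimp f g) <-> (sat h env f -> sat h env g).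
Proof. by rewrite /=; tauto. Qed.

Lemma sat_fdisj env f g : sat h env (fdisj f g) <-> sat h env f \/ sat h env g.
Proof. by rewrite /=; tauto. Qed.

Lemma sat_fconj env l : sat h env (fconj l) <-> forall f, List.In f l -> sat h env f.
Proof.
elim: l => [|f l IH] /=; first by split=> // _ f [].
by rewrite IH; split=> [[Hf Hl] g [<-|Hg]|H]; auto.
Qed.

Lemma sat_fexists k f env :
  sat h env (fexists k f) <-> exists zs, size zs = k /\ sat h (zs ++ env) f.
Proof.
elim: k env => [|k IH] env /=.
  by split=> [Hf|[zs [/size0nil -> //]]]; exists [::].
split=> [[x /IH [zs [Hzs Hf]]]|[zs [Hzs Hf]]].
  by exists (rcons zs x); rewrite size_rcons Hzs cat_rcons.
case/lastP: zs Hzs Hf => [//|zs x]; rewrite size_rcons cat_rcons => -[Hzs] Hf.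
by exists x; apply/IH; exists zs.
Qed.

Lemma sat_fforall k f env :
  sat h env (fforall k f) <-> forall zs, size zs = k -> sat h (zs ++ env) f.
Proof.
rewrite /fforall /= sat_fexists; split=> [H zs Hzs|H [zs [Hzs Hf]]]; last exact: Hf (H zs Hzs).
by apply: NNPP => Hf; apply: H; exists zs.
Qed.
End Connectives.

Lemma presburger_transfer (N : pstruct) (f : pform void) (k : nat) : presburger N ->
  (forall zs : seq int, size zs = k -> sat (@of_void Zstruct) zs f) ->
  forall zs : seq N, size zs = k -> sat (@of_void N) zs f.
Proof.
move=> HN HZ zs Hzs.
have /(HN (fforall k f)) : sat (@of_void Zstruct) [::] (fforall k f).
  by apply/sat_fforall => zs' /HZ; rewrite cats0.
by move/sat_fforall/(_ zs Hzs); rewrite cats0.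
Qed.
Arguments presburger_transfer {N f k} HN HZ zs.

Definition dlt (N : pstruct) (b : bool) (x y : N) : Prop :=
  if b then slt x y else slt y x.

Definition fdlt {A : Type} (b : bool) (t u : pterm A) : pform A :=
  if b then FLt t u else FLt u t.

Lemma sat_fdlt (N : pstruct) (A : Type) (h : A -> N) env b t u :
  sat h env (fdlt b t u) <-> dlt b (teval h env t) (teval h env u).
Proof. by case: b. Qed.

Section PresburgerOrder.
Variables (N : pstruct) (HN : presburger N).

Lemma slt_irr (x : N) : ~ slt x x.
Proof.
have HZ (zs : seq int) : size zs = 1 ->
    sat (@of_void Zstruct) zs (FNot (FLt (TVar 0) (TVar 0))).
  by case: zs => [|y []] //= _; rewrite ltxx.
exact (presburger_transfer HN HZ [:: x] erefl).
Qed.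

Lemma slt_trans (x y z : N) : slt x y -> slt y z -> slt x z.
Proof.
pose f : pform void :=
  fimp (FAnd (FLt (TVar 0) (TVar 1)) (FLt (TVar 1) (TVar 2))) (FLt (TVar 0) (TVar 2)).
have HZ (zs : seq int) : size zs = 3 -> sat (@of_void Zstruct) zs f.
  by case: zs => [|u [|v [|w []]]] //= _ [[Huv Hvw]]; apply; exact: lt_trans Hvw.
by have := presburger_transfer HN HZ [:: x; y; z] erefl; rewrite sat_fimp /=; tauto.
Qed.

Lemma slt_trichotomy (x y : N) : slt x y \/ x = y \/ slt y x.
Proof.
pose f : pform void :=
  fdisj (FLt (TVar 0) (TVar 1)) (fdisj (FEq (TVar 0) (TVar 1)) (FLt (TVar 1) (TVar 0))).
have HZ (zs : seq int) : size zs = 2 -> sat (@of_void Zstruct) zs f.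
  case: zs => [|u [|v []]] // _; rewrite !sat_fdisj /=.
  by case: (ltgtP u v); auto.
by have := presburger_transfer HN HZ [:: x; y] erefl; rewrite !sat_fdisj.
Qed.

Lemma dlt_irr b (x : N) : ~ dlt b x x.
Proof. by case: b; apply: slt_irr. Qed.

Lemma dlt_trans b (x y z : N) : dlt b x y -> dlt b y z -> dlt b x z.
Proof. by case: b => /= Hxy Hyz; [exact: slt_trans Hxy Hyz|exact: slt_trans Hyz Hxy]. Qed.

Lemma dlt_trichotomy b (x y : N) : dlt b x y \/ x = y \/ dlt b y x.
Proof. by case: b (slt_trichotomy x y) => /=; tauto. Qed.

Lemma exists_dlt_min b (d : N) ds : exists m, List.In m (d :: ds) /\
  forall d', List.In d' (d :: ds) -> ~ dlt b d' m.
Proof.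
elim: ds d => [|d1 ds IH] d.
  by exists d; split=> [|d' [<-|[]]]; [left|exact: dlt_irr].
have [m [Hm Hmin]] := IH d1.
have [Hdm|Hdm] := classic (dlt b d m).
  exists d; split=> [|d' [<-|Hd'] Hd'd]; [by left|exact: dlt_irr Hd'd|].
  exact: Hmin d' Hd' (dlt_trans Hd'd Hdm).
by exists m; split=> [|d' [<-//|Hd']]; [right|exact: Hmin].
Qed.
End PresburgerOrder.

(* Variables beyond [k] become [0], which is also what [teval] assigns to them. *)
Definition trunc_subst {A : Type} (k i : nat) : pterm A :=
  if i < k then TVar i else TZero.

Lemma sat_trunc (N : pstruct) (A B : Type) (h : B -> N) (h' : A -> N) tau f x ys :
  (forall a, List.In a (fparams f) -> teval h (x ++ ys) (tau a) = h' a) ->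
  (sat h (x ++ ys) (fsubst (trunc_subst (size x)) tau f) <-> sat h' x f).
Proof.
move=> Htau; apply: sat_subst => // i; rewrite /trunc_subst.
by case: ifP => Hi /=; [rewrite nth_cat Hi|rewrite nth_default // leqNgt Hi].
Qed.

Fixpoint index_of {A : Type} (x : A) (s : seq A) : nat :=
  if s is y :: s then
    if excluded_middle_informative (x = y) then 0 else (index_of x s).+1
  else 0.

Lemma nth_index_of (A N : Type) (h : A -> N) d x s :
  List.In x s -> nth d (map h s) (index_of x s) = h x.
Proof.
elim: s => [|y s IH] //= Hx.
case: excluded_middle_informative => [Exy|Hxy]; first by rewrite /= Exy.
by apply: IH; case: Hx => // Hyx; case: Hxy.
Qed.

Definition abstract_params {A : Type} (k : nat) (f : pform A) : pform void :=
  fsubst (trunc_subst k) (fun a => TVar (k + index_of a (fparams f))) f.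

Lemma sat_abstract_params (N : pstruct) (A : Type) (h : A -> N) env f :
  sat (@of_void N) (env ++ map h (fparams f)) (abstract_params (size env) f) <-> sat h env f.
Proof.
apply: sat_trunc => a Ha /=.
by rewrite nth_cat ltnNge leq_addr /= addKn nth_index_of.
Qed.

Section ElementaryEmbedding.
Variables (M0 M : pstruct) (e : M0 -> M) (Hemb : elem_emb e).

Lemma elem_emb_sat (f : pform M0) env : sat id env f <-> sat e (map e env) f.
Proof.
rewrite -(sat_abstract_params id) -(sat_abstract_params e) Hemb.
by rewrite map_cat map_id size_map.
Qed.

Lemma elem_emb_witness (f : pform M0) y : sat e [:: y] f -> exists m, sat e [:: e m] f.
Proof.
move=> Hy; have /(elem_emb_sat (FEx f) [::]) [m Hm] : sat e [::] (FEx f) by exists y.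
by exists m; apply/(elem_emb_sat f [:: m]).
Qed.

Lemma presburger_elem_emb : presburger M -> presburger M0.
Proof. by move=> HM f; rewrite HM (Hemb f [::]). Qed.
End ElementaryEmbedding.

Definition dlt_bound (N : pstruct) (b : bool) (P : N -> Prop) (bd : N) : Prop :=
  forall y, P y -> ~ dlt b y bd.

Definition extremum_principle (N : pstruct) (b : bool) (P : N -> Prop) : Prop :=
  (exists y, P y) -> (exists bd, dlt_bound b P bd) -> exists m, P m /\ dlt_bound b P m.

Lemma extremum_principle_ext (N : pstruct) b (P Q : N -> Prop) :
  (forall y, P y <-> Q y) -> extremum_principle b P -> extremum_principle b Q.
Proof.
move=> PQ HP [y /PQ Py] [bd Hbd].
have Hbd' : dlt_bound b P bd by move=> z /PQ; apply: Hbd.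
have [m [/PQ Qm Hm]] := HP (ex_intro _ y Py) (ex_intro _ bd Hbd').
by exists m; split=> // z /PQ; apply: Hm.
Qed.

Lemma int_least (P : int -> Prop) (bd : int) : (exists y, P y) ->
  (forall y, P y -> (bd <= y)%R) -> exists m, P m /\ forall y, P y -> (m <= y)%R.
Proof.
move=> [y0 Py0] Hbd; apply: NNPP => Hnone.
have above k : forall y, P y -> (bd + Posz k <= y)%R.
  elim: k => [|k IH] y Py; first by have := Hbd y Py; lia.
  have := IH y Py; case: (eqVneq y (bd + Posz k)%R) => [Ey|/eqP Hne]; last lia.
  case: Hnone; exists y; split=> // z Pz; have := IH z Pz; lia.
have := above (absz (y0 - bd)).+1 y0 Py0; lia.
Qed.

Lemma int_extremum b (P : int -> Prop) : extremum_principle (N := Zstruct) b P.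
Proof.
case: b => [[y Py] [bd Hbd]|[y Py] [bd Hbd]] /=.
  have Hbd' z : P z -> (bd <= z)%R by move/Hbd => /=; lia.
  have [m [Pm Hm]] := int_least (ex_intro _ y Py) Hbd'.
  by exists m; split=> // z /Hm /=; lia.
have Py' : P (- (- y))%R by rewrite opprK.
have Hbd' z : P (- z)%R -> (- bd <= z)%R by move/Hbd => /=; lia.
have [m [Pm Hm]] := @int_least (fun z => P (- z)%R) _ (ex_intro _ _ Py') Hbd'.
by exists (- m)%R; split=> // z Pz /=; have := Hm (- z)%R; rewrite opprK => /(_ Pz); lia.
Qed.

Definition skip_var1 {A : Type} (i : nat) : pterm A :=
  if i is j.+1 then TVar j.+2 else TVar 0.

Definition bound_form {A : Type} (b : bool) (psi : pform A) : pform A :=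
  FNot (FEx (FAnd (fsubst skip_var1 (@TPar A) psi) (fdlt b (TVar 0) (TVar 1)))).

Lemma sat_bound_form (N : pstruct) (A : Type) (h : A -> N) b psi bd env :
  sat h (bd :: env) (bound_form b psi) <->
  dlt_bound b (fun y => sat h (y :: env) psi) bd.
Proof.
have E y : sat h (y :: bd :: env) (fsubst skip_var1 (@TPar A) psi) <-> sat h (y :: env) psi.
  by apply: sat_subst => // -[|i].
rewrite /bound_form /=; split=> [H y /E Py Hy|H [y [/E Py]]].
  by apply: H; exists y; split=> //; apply/sat_fdlt.
by move/sat_fdlt; apply: H.
Qed.

Definition extremum_form (b : bool) (psi : pform void) : pform void :=
  fimp (FEx psi) (fimp (FEx (bound_form b psi)) (FEx (FAnd psi (bound_form b psi)))).

Lemma sat_extremum_form (N : pstruct) b psi env :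
  sat (@of_void N) env (extremum_form b psi) <->
  extremum_principle b (fun y => sat (@of_void N) (y :: env) psi).
Proof.
rewrite /extremum_form !sat_fimp /=.
split=> [H Hy [bd /sat_bound_form Hbd]|H Hy [bd /sat_bound_form Hbd]].
  by have [m [Pm /sat_bound_form Hm]] := H Hy (ex_intro _ bd Hbd); exists m.
have [m [Pm Hm]] := H Hy (ex_intro _ bd Hbd).
by exists m; split=> //; apply/sat_bound_form.
Qed.

Lemma presburger_extremum (N : pstruct) (A : Type) (h : A -> N) b (psi : pform A) :
  presburger N -> extremum_principle b (fun y => sat h [:: y] psi).
Proof.
move=> HN; set env := map h (fparams psi).
have HZ (zs : seq int) : size zs = size env ->
    sat (@of_void Zstruct) zs (extremum_form b (abstract_params 1 psi)).
  by move=> _; apply/sat_extremum_form; apply: int_extremum.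
move: (presburger_transfer HN HZ env erefl) => /sat_extremum_form.
by apply: extremum_principle_ext => y; exact: (sat_abstract_params h [:: y]).
Qed.

Lemma elem_emb_extremum (M0 M : pstruct) (e : M0 -> M) b (psi : pform M0) :
  presburger M -> elem_emb e ->
  let P := fun y => sat e [:: y] psi in
  (exists y, P y) -> (exists bd, dlt_bound b P bd) ->
  exists m, P (e m) /\ dlt_bound b P (e m).
Proof.
move=> HM Hemb P Hy Hbd.
have [m [Pm Hm]] := @presburger_extremum _ _ e b psi HM Hy Hbd.
have Hm' : sat e [:: m] (FAnd psi (bound_form b psi)) by split=> //; apply/sat_bound_form.
have [m0 [Pm0 /sat_bound_form Hm0]] := elem_emb_witness Hemb Hm'.
by exists m0.
Qed.

Fixpoint num (k : nat) : pterm void := if k is k.+1 then TAdd (num k) TOne else TZero.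

Lemma num_inj (N : pstruct) : presburger N ->
  injective (fun k => teval (@of_void N) [::] (num k)).
Proof.
have num_int k : teval (@of_void Zstruct) [::] (num k) = Posz k by elim: k => //= k ->; lia.
move=> HN k j Ekj; apply: NNPP => Hkj.
have /HN : sat (@of_void Zstruct) [::] (FNot (FEq (num k) (num j))).
  by rewrite /= !num_int => -[].
by apply.
Qed.

Lemma finite_choice (X Y : Type) (S : Y -> Prop) (R : X -> Y -> Prop) (l : seq X) :
  (forall x, List.In x l -> exists y, S y /\ R x y) ->
  exists ys, (forall y, List.In y ys -> S y) /\
             forall x, List.In x l -> exists y, List.In y ys /\ R x y.
Proof.
elim: l => [|x l IH] H; first by exists [::].
have [ys [Sys Rys]] := IH (fun z Hz => H z (or_intror Hz)).
have [y [Sy Rxy]] := H x (or_introl erefl).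
exists (y :: ys); split=> [z [<-|/Sys]//|z [<-|/Rys [w [Hw Rzw]]]].
  by exists y; split=> //; left.
by exists w; split=> //; right.
Qed.

Lemma smaller_inj (X X' Y : Type) (f : X' -> X) :
  injective f -> smaller X Y -> smaller X' Y.
Proof.
move=> finj [[g ginj] HYX]; split; first by exists (g \o f); exact: inj_comp.
by move=> [h hinj]; apply: HYX; exists (f \o h); exact: inj_comp.
Qed.

Lemma smaller_image (X Y : Type) (g : X -> Y) :
  smaller X Y -> smaller {y | exists x, g x = y} Y.
Proof.
move=> [_ HYX]; split.
  by exists (@proj1_sig _ _) => -[y Hy] [y' Hy'] /= Eyy'; exact: subset_eq_compat.
move=> [h hinj]; apply: HYX.
pose pre (y : {y | exists x, g x = y}) :=
  proj1_sig (constructive_indefinite_description _ (proj2_sig y)).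
have g_pre y : g (pre y) = proj1_sig y.
  by rewrite /pre; case: constructive_indefinite_description.
exists (pre \o h) => y y' /(congr1 g); rewrite /= !g_pre => E.
by apply: hinj; case: (h y) (h y') E => [z Hz] [z' Hz'] /= E; exact: subset_eq_compat.
Qed.

(* Hilbert's hotel: send [f k] to [f (2k)] and the new points to [f (2k+1)]. *)
Lemma inj_sum_nat (X : Type) (f : nat -> X) :
  injective f -> exists g : X + nat -> X, injective g.
Proof.
move=> finj.
pose g (x : X + nat) := match x with
  | inl x => if excluded_middle_informative (exists k, f k = x) is left H
             then f (2 * proj1_sig (constructive_indefinite_description _ H)) else x
  | inr i => f (2 * i).+1 end.
have g_inl x : (exists k, f k = x /\ g (inl x) = f (2 * k)) \/
               ((forall k, f k <> x) /\ g (inl x) = x).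
  rewrite /g; case: excluded_middle_informative => [H|H].
    by left; case: constructive_indefinite_description => k Hk /=; exists k.
  by right; split=> // k Hk; apply: H; exists k.
exists g => -[x|i] [x'|i'].
- case: (g_inl x) => [[k [<- ->]]|[Hx ->]]; case: (g_inl x') => [[k' [<- ->]]|[Hx' ->]].
  + by move/finj => Ek; congr (inl (f _)); lia.
  + by move=> E; case: (Hx' (2 * k)).
  + by move=> E; case: (Hx (2 * k')).
  + by move=> ->.
- case: (g_inl x) => [[k [_ ->]] /finj|[Hx ->] E]; [lia|by case: (Hx (2 * i').+1)].
- case: (g_inl x') => [[k [_ ->]] /finj|[Hx ->] E]; [lia|by case: (Hx (2 * i).+1)].
- by move=> /finj Ei; congr inr; lia.
Qed.

Lemma inj_option_nat (X : Type) (f : nat -> X) :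
  injective f -> exists g : option X -> X, injective g.
Proof.
move=> /inj_sum_nat [g ginj].
pose o (x : option X) := if x is Some x then inl x else inr 0.
by exists (g \o o); apply: inj_comp ginj _ => -[x|] [x'|] // [->].
Qed.

Section Saturation.
Variables (M : pstruct) (Hsat : saturated M).

Definition fin_sat (A : Type) (g : A -> M) (n : nat) (Sig : pform A -> Prop) : Prop :=
  forall l, (forall f, List.In f l -> Sig f) ->
    exists c, size c = n /\ forall f, List.In f l -> sat g c f.

Lemma saturated_realize1 (A : Type) (g : A -> M) (Sig : pform A -> Prop) :
  smaller A M -> fin_sat g 1 Sig -> exists y, forall f, Sig f -> sat g [:: y] f.
Proof.
move=> HA Hfin; pose B y := exists x, g x = y.
pose lift (f : pform A) := fsubst TVar (fun x => TPar (exist B (g x) (ex_intro _ x erefl))) f.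
have sat_lift env f : sat (@proj1_sig M B) env (lift f) <-> sat g env f by apply: sat_subst.
pose q f' := exists f, Sig f /\ f' = lift f.
have Hq l' : (forall f', List.In f' l' -> q f') ->
    exists y, forall f', List.In f' l' -> sat (@proj1_sig M B) [:: y] f'.
  move=> /(finite_choice (S := Sig)) [l [HlSig Hll']].
  have [c [Hc Hy]] := Hfin l HlSig.
  case: c Hc Hy => [|y [|]] // _ Hy.
  by exists y => f' /Hll' [f [Hf ->]]; apply/sat_lift; exact: Hy.
have [y Hy] := Hsat (smaller_image g HA) Hq.
by exists y => f Hf; apply/sat_lift; apply: Hy; exists f.
Qed.

Definition proj_last (A : Type) (n : nat) (Sig : pform A -> Prop) (f : pform A) : Prop :=
  exists l, (forall f, List.In f l -> Sig f) /\ f = fexists n (fconj l).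

Lemma fin_sat_proj_last (A : Type) (g : A -> M) n Sig :
  fin_sat g n.+1 Sig -> fin_sat g 1 (proj_last n Sig).
Proof.
move=> Hfin l' /(finite_choice (S := fun l => forall f, List.In f l -> Sig f)) [ls [Hls Hll']].
have [|c [Hc Hcs]] := Hfin (List.concat ls).
  by move=> f /List.in_concat [l [Hl Hf]]; exact: Hls l Hl f Hf.
case/lastP: c Hc Hcs => [//|zs y]; rewrite size_rcons => -[Hzs] Hcs.
exists [:: y]; split=> // f' /Hll' [l [Hl ->]].
apply/sat_fexists; exists zs; split=> //; rewrite cats1; apply/sat_fconj => f Hf.
by apply: Hcs; apply/List.in_concat; exists l.
Qed.

Definition add_param (A : Type) (g : A -> M) (y : M) (x : option A) : M :=
  if x is Some x then g x else y.

Definition pin_last (A : Type) (n : nat) (f : pform A) : pform (option A) :=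
  fsubst (fun i => if i == n then TPar None else TVar i) (fun x => TPar (Some x)) f.

Lemma sat_pin_last (A : Type) (g : A -> M) y n zs f : size zs = n ->
  (sat (add_param g y) zs (pin_last n f) <-> sat g (rcons zs y) f).
Proof.
move=> Hzs; apply: sat_subst => // i; rewrite nth_rcons Hzs.
case: eqP => [->|_]; first by rewrite ltnn.
by case: ifP => // Hi /=; rewrite nth_default // Hzs leqNgt Hi.
Qed.

Lemma fin_sat_pin_last (A : Type) (g : A -> M) n Sig y :
  (forall f, proj_last n Sig f -> sat g [:: y] f) ->
  fin_sat (add_param g y) n (fun f' => exists f, Sig f /\ f' = pin_last n f).
Proof.
move=> Hy l' /(finite_choice (S := Sig)) [l [HlSig Hll']].
have /sat_fexists [zs [Hzs Hl]] := Hy _ (ex_intro _ l (conj HlSig erefl)).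
exists zs; split=> // f' /Hll' [f [Hf ->]]; rewrite sat_pin_last // -cats1.
by move/sat_fconj: Hl; apply.
Qed.

(* Realize the last coordinate by saturation and turn it into a parameter; an
   infinite parameter set stays small when a point is added (Hilbert's hotel). *)
Lemma saturated_realize n : forall (A : Type) (g : A -> M) (Sig : pform A -> Prop),
  (exists f : nat -> A, injective f) -> smaller A M -> fin_sat g n Sig ->
  exists c, size c = n /\ forall f, Sig f -> sat g c f.
Proof.
elim: n => [|n IH] A g Sig [f finj] HA Hfin.
  exists [::]; split=> // f' Hf'.
  have [|c [/size0nil -> Hc]] := Hfin [:: f']; last by apply: Hc; left.
  by move=> f'' [<-|[]].
have [y Hy] := saturated_realize1 HA (fin_sat_proj_last Hfin).
have [o oinj] := inj_option_nat finj.
have Hinf : exists f : nat -> option A, injective f by exists (Some \o f) => i j [/finj].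
have [zs [Hzs Hzs']] := IH _ _ _ Hinf (smaller_inj oinj HA) (fin_sat_pin_last Hy).
exists (rcons zs y); split=> [|f' Hf']; first by rewrite size_rcons Hzs.
by move: (Hzs' _ (ex_intro _ f' (conj Hf' erefl))); rewrite sat_pin_last.
Qed.
End Saturation.

Section OneSide.
Variables (M0 M : pstruct) (e : M0 -> M) (n : nat) (p : pform M0 -> Prop)
  (alpha : n.-tuple M -> M) (a : n.-tuple M) (phi : pform M0).
Hypotheses (HM : presburger M) (Hsat : saturated M) (Hemb : elem_emb e)
  (HM0 : smaller M0 M) (Ha : realizes e p a)
  (Hna : nonalgebraic e (tp1 e (alpha a)))
  (Hphi : forall c : n.-tuple M, realizes e p c ->
     forall y, alpha c = y <-> sat e (c ++ [:: y]) phi).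

Definition cut_dcl (d : M) : Prop := in_dcl e a d /\ same_cut e d (alpha a).

Definition image_form (th : pform M0) : pform M0 :=
  fexists n (FAnd (fsubst (trunc_subst n) (@TPar M0) th) phi).

Lemma sat_image_form th y : sat e [:: y] (image_form th) <->
  exists x, [/\ size x = n, sat e x th & sat e (x ++ [:: y]) phi].
Proof.
have E x : size x = n ->
    sat e (x ++ [:: y]) (fsubst (trunc_subst n) (@TPar M0) th) <-> sat e x th.
  by move=> <-; apply: sat_trunc.
rewrite sat_fexists; split=> [[x [Hx [/(E x Hx) Hth Hxy]]]|[x [Hx /(E x Hx) Hth Hxy]]].
  by exists x.
by exists x; split.
Qed.

Lemma exists_below b th d : sat e a th -> cut_dcl d ->
  exists x y, [/\ size x = n, sat e x th, sat e (x ++ [:: y]) phi & dlt b y d].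
Proof.
move=> Hth [_ Hcut]; apply: NNPP => Hnone.
pose P y := sat e [:: y] (image_form th).
have Pa : P (alpha a).
  by apply/sat_image_form; exists a; split; rewrite ?size_tuple //; apply/Hphi.
have Pd : dlt_bound b P d.
  by move=> y /sat_image_form [x [Hx Hxth Hxy]] Hyd; apply: Hnone; exists x, y.
have [m [Pm Hm]] := elem_emb_extremum HM Hemb (ex_intro _ _ Pa) (ex_intro _ _ Pd).
have alpha_m : alpha a <> e m.
  move=> E; apply: (Hna (f := FEq (TVar 0) (TPar m))) => //.
  by exists [:: e m] => z /= ->; left.
have d_m : d <> e m.
  by move=> E; apply: alpha_m; apply/(Hcut (FEq (TVar 0) (TPar m))).
have : dlt b d (e m).
  by case: (dlt_trichotomy HM b d (e m)) => [//|[//|/(Pd _ Pm)]].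
have lt_dm : lt_form (fdlt b (TVar 0) (TPar m)) by rewrite /fdlt; case: ifP.
move=> /(sat_fdlt e [:: d] b (TVar 0) (TPar m))/(Hcut _ lt_dm)/sat_fdlt.
exact: Hm _ Pa.
Qed.

Lemma exists_below_all b th ds : sat e a th -> (forall d, List.In d ds -> cut_dcl d) ->
  exists x y, [/\ size x = n, sat e x th, sat e (x ++ [:: y]) phi &
                  forall d, List.In d ds -> dlt b y d].
Proof.
case: ds => [|d0 ds] Hth Hds.
  by exists a, (alpha a); split; rewrite ?size_tuple //; apply/Hphi.
have [m [Hm Hmin]] := exists_dlt_min HM b d0 ds.
have [x [y [Hx Hxth Hxy Hym]]] := exists_below b Hth (Hds m Hm).
exists x, y; split=> // d Hd.
case: (dlt_trichotomy HM b m d) => [|[<- //|/(Hmin d Hd)//]].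
exact: dlt_trans Hym.
Qed.

Definition param (x : M0 + nat) : M :=
  match x with inl m => e m | inr i => nth (s0 M) a i end.

Definition lift_type (f : pform M0) : pform (M0 + nat) :=
  fsubst (trunc_subst n) (fun m => TPar (inl m)) f.

Definition lift_graph : pform (M0 + nat) := fsubst TVar (fun m => TPar (inl m)) phi.

Definition at_a (i : nat) : pterm (M0 + nat) :=
  if i is j.+1 then TPar (inr j) else TVar 0.

(* In the environment [z :: x ++ [:: y]] with [size x = n], variable [n.+1] is [y]. *)
Definition below_form (b : bool) (chi : pform M0) : pform (M0 + nat) :=
  FEx (FAnd (fsubst at_a (fun m => TPar (inl m)) chi) (fdlt b (TVar n.+1) (TVar 0))).

Lemma sat_lift_type x y f : size x = n ->
  (sat param (x ++ [:: y]) (lift_type f) <-> sat e x f).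
Proof. by move=> Hx; rewrite /lift_type -Hx; apply: sat_trunc. Qed.

Lemma sat_lift_graph c : sat param c lift_graph <-> sat e c phi.
Proof. exact: sat_subst. Qed.

Lemma sat_below_form b chi x y : size x = n ->
  (sat param (x ++ [:: y]) (below_form b chi) <->
   exists z, sat e (z :: a) chi /\ dlt b y z).
Proof.
move=> Hx.
have E z : sat param (z :: x ++ [:: y]) (fsubst at_a (fun m => TPar (inl m)) chi)
    <-> sat e (z :: a) chi by apply: sat_subst => // -[|i].
have Ey z : teval param (z :: x ++ [:: y]) (TVar n.+1) = y by rewrite /= nth_cat Hx ltnn subnn.
split=> -[z [Hz Hyz]]; exists z; split; try exact/E.
  by move/sat_fdlt: Hyz; rewrite Ey.
by apply/sat_fdlt; rewrite Ey.
Qed.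

Inductive side_form (b : bool) : pform (M0 + nat) -> Prop :=
| SideType f of p f : side_form b (lift_type f)
| SideGraph : side_form b lift_graph
| SideBelow chi d of cut_dcl d & (forall z, sat e (z :: a) chi <-> z = d) :
    side_form b (below_form b chi).

Lemma side_form_reduce b l : (forall F, List.In F l -> side_form b F) ->
  exists th ds, [/\ sat e a th, forall d, List.In d ds -> cut_dcl d &
    forall x y, size x = n -> sat e x th -> sat e (x ++ [:: y]) phi ->
      (forall d, List.In d ds -> dlt b y d) ->
      forall F, List.In F l -> sat param (x ++ [:: y]) F].
Proof.
elim: l => [|F l IH] Hl; first by exists (FEq TZero TZero), [::].
have [th [ds [Hth Hds Hforce]]] := IH (fun G HG => Hl G (or_intror HG)).
case: (Hl F (or_introl erefl)) => [f Hf||chi d Hd Hchi].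
- exists (FAnd f th), ds; split=> [|//|x y Hx [Hfx Hthx] Hxy Hyds G [<-|HG]].
  + by split; [exact: Ha|].
  + exact/sat_lift_type.
  + exact: Hforce.
- exists th, ds; split=> // x y Hx Hthx Hxy Hyds G [<-|HG].
  + exact/sat_lift_graph.
  + exact: Hforce.
- exists th, (d :: ds); split=> [//|d' [<-|/Hds]//|x y Hx Hthx Hxy Hyds G [<-|HG]].
  + by apply/sat_below_form => //; exists d; split; [apply/Hchi|apply: Hyds; left].
  + by apply: Hforce => // d' Hd'; apply: Hyds; right.
Qed.

Lemma side_form_fin_sat b : fin_sat param n.+1 (side_form b).
Proof.
move=> l /side_form_reduce [th [ds [Hth Hds Hforce]]].
have [x [y [Hx Hxth Hxy Hyds]]] := exists_below_all b Hth Hds.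
by exists (x ++ [:: y]); split; [rewrite size_cat Hx addn1|exact: Hforce].
Qed.

Lemma one_side b : exists a1 : n.-tuple M,
  realizes e p a1 /\ forall d, cut_dcl d -> dlt b (alpha a1) d.
Proof.
have [h hinj] := inj_sum_nat (num_inj (presburger_elem_emb Hemb HM)).
have Hinf : exists f : nat -> M0 + nat, injective f by exists inr => i j [].
have [c [Hc Hsides]] :=
  saturated_realize Hsat Hinf (smaller_inj hinj HM0) (@side_form_fin_sat b).
case/lastP: c Hc Hsides => [//|x y]; rewrite size_rcons -cats1 => -[Hx] Hsides.
pose a1 : n.-tuple M := Tuple (introT eqP Hx).
have Ha1 : realizes e p a1.
  by move=> f Hf; apply/(sat_lift_type y f Hx); apply: Hsides; exact: SideType.
have Hy : alpha a1 = y.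
  by apply/Hphi => //; apply/sat_lift_graph; apply: Hsides; exact: SideGraph.
exists a1; split=> // d Hd; have [[chi [Hchi Hdef]] _] := Hd.
have Hchi' z : sat e (z :: a) chi <-> z = d by split=> [/Hdef|->].
have [z [/Hchi' -> Hyd]] := (sat_below_form b chi y Hx).1 (Hsides _ (SideBelow b Hd Hchi')).
by rewrite Hy.
Qed.
End OneSide.

Theorem lemma4p3 (M0 M : pstruct) (e : car M0 -> car M) (n : nat)
  (p : pform (car M0) -> Prop) (alpha : n.-tuple (car M) -> car M) (a : n.-tuple (car M)) :
  presburger M -> saturated M -> elem_emb e -> smaller (car M0) (car M) ->
  complete_type n p ->
  (forall c : n.-tuple (car M), realizes e p c -> has_dim e c n) ->
  rel_definable e p alpha ->
  realizes e p a ->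
  nonalgebraic e (tp1 e (alpha a)) ->
  exists a1 a2 : n.-tuple (car M),
    [/\ realizes e p a1, realizes e p a2 &
        forall d : car M, in_dcl e a d -> same_cut e d (alpha a) ->
          slt (alpha a1) d /\ slt d (alpha a2)].
Proof.
move=> HM Hsat Hemb HM0 _ _ [f [[phi Hf] Halpha]] Ha Hna.
have Hphi c : realizes e p c -> forall y, alpha c = y <-> sat e (c ++ [:: y]) phi.
  by move=> Hc y; rewrite Halpha.
have [a1 [Ha1 Hbelow]] := one_side HM Hsat Hemb HM0 Ha Hna Hphi true.
have [a2 [Ha2 Habove]] := one_side HM Hsat Hemb HM0 Ha Hna Hphi false.
by exists a1, a2; split=> // d Hd Hcut; split; [exact: Hbelow|exact: Habove].
Qed.
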